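(* Let $\Sigma=(V,E)$ be a finite directed network in which every edge has capacity $1$, which is inner-superbalanced, and whose boundary is partitioned as $\partial\Sigma=A\sqcup B\sqcup C\sqcup D$. Then $$-I_3(A:B:C):=S(AB)+S(AC)+S(BC)-S(A)-S(B)-S(C)-S(ABC)\ \ge\ 0.$$
   Context: A flow on a directed network with capacities $c$ is a function $v:E\to\mathbb R_{\ge0}$ with $v^e\le c^e$ and, at every non-boundary vertex $x$, total inflow equal to total outflow. The flux of $v$ out of a boundary set $X\subset\partial\Sigma$ is $\sum_{e:s(e)\in X}v^e-\sum_{e:t(e)\in X}v^e$, where $s(e),t(e)$ are the source and target of $e$; $S(X)$ is the maximum flux out of $X$ over all flows, and juxtaposition such as $AB$ denotes the union $A\cup B$. A network is inner-superbalanced if at each non-boundary vertex the total capacity of incoming edges is at most that of outgoing edges. *)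

From HB Require Import structures.
From mathcomp Require Import all_boot all_order all_algebra.
From mathcomp Require Import classical_sets reals.
Set Implicit Arguments. Unset Strict Implicit. Unset Printing Implicit Defensive.
Import Order.TTheory GRing.Theory Num.Theory.
Local Open Scope ring_scope.

Section Network.
Variables (R : realType) (V E : finType) (src tgt : E -> V).
Variables (bnd : {set V}) (c : E -> R).

Definition is_flow (v : E -> R) : Prop :=
  (forall e, 0 <= v e /\ v e <= c e) /\
  (forall x, x \notin bnd ->
     \sum_(e | tgt e == x) v e = \sum_(e | src e == x) v e).

Definition flux (v : E -> R) (X : {set V}) : R :=
  \sum_(e | src e \in X) v e - \sum_(e | tgt e \in X) v e.

(* S(X): maximal flux out of X over all flows (the maximum exists: the set of
   flows is a nonempty compact polytope), expressed as the supremum. *)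
Definition maxflux (X : {set V}) : R :=
  sup [set r | exists v, is_flow v /\ r = flux v X]%classic.

Definition inner_superbalanced : Prop :=
  forall x, x \notin bnd ->
    \sum_(e | tgt e == x) c e <= \sum_(e | src e == x) c e.
End Network.

From Pilot Require Import Defs.
From HB Require Import structures.
(* Loaded before all_boot so that the finset and fintype names (set0, setP,
   subsetP, ...) take precedence over their classical_sets homonyms. *)
From mathcomp Require Import classical_sets reals.
From mathcomp Require Import all_boot all_order all_algebra.
From mathcomp Require Import lra.
Set Implicit Arguments. Unset Strict Implicit. Unset Printing Implicit Defensive.
Import Order.TTheory GRing.Theory Num.Theory.
Local Open Scope ring_scope.

(* S(X) is the minimum capacity of a cut W with W ∩ ∂Σ = X: every flow is
   bounded by every such cut, and for unit capacities augmenting 0/1 flows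
   along residual paths ends with a flow saturating one.  Take minimum cuts
   W1, W2, W3 for AB, AC, BC.  Then W1 ∩ W2 \ W3, W1 ∩ W3 \ W2, W2 ∩ W3 \ W1
   and W1 ∪ W2 ∪ W3 are cuts for A, B, C and ABC, so it suffices that their
   capacities add up to at most those of W1, W2, W3.  Edge by edge, the four
   new cuts are crossed at most as often as the three old ones, up to the
   change along the edge of the indicator of T = W1 ∩ W2 ∩ W3; summed over the
   edges, this correction is the capacity flux out of T, which is nonnegative
   because T consists of inner vertices and the network is inner-superbalanced. *)

Lemma setI_tripartition (T : finType) (K W1 W2 W3 A B C : {set T}) :
  [disjoint A & B] -> [disjoint A & C] -> [disjoint B & C] ->
  W1 :&: K = A :|: B -> W2 :&: K = A :|: C -> W3 :&: K = B :|: C ->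
  [/\ (W1 :&: W2 :\: W3) :&: K = A, (W1 :&: W3 :\: W2) :&: K = B,
      (W2 :&: W3 :\: W1) :&: K = C, (W1 :|: W2 :|: W3) :&: K = A :|: B :|: C
    & [disjoint W1 :&: W2 :&: W3 & K]].
Proof.
move=> /disjoint_setI0/setP dAB /disjoint_setI0/setP dAC /disjoint_setI0/setP dBC.
move=> /setP E1 /setP E2 /setP E3.
split; [apply/setP=> w ..| rewrite -setI_eq0; apply/eqP/setP=> w];
  move: (E1 w) (E2 w) (E3 w) (dAB w) (dAC w) (dBC w); rewrite !inE;
  by case: (w \in K); case: (w \in A); case: (w \in B); case: (w \in C);
     case: (w \in W1); case: (w \in W2); case: (w \in W3).
Qed.

Section Network.
Variables (R : realType) (V E : finType) (src tgt : E -> V).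
Variables (bnd : {set V}) (c : E -> R).

Local Notation flux := (Defs.flux src tgt).
Local Notation is_flow := (Defs.is_flow src tgt bnd c).
Local Notation maxflux := (Defs.maxflux src tgt bnd c).

Definition leaves (W : {set V}) (e : E) : bool := (src e \in W) && (tgt e \notin W).

Definition cut_cap (W : {set V}) : R := \sum_(e | leaves W e) c e.

Lemma sum_partition_set1 (f : E -> V) (v : E -> R) (W : {set V}) :
  \sum_(e | f e \in W) v e = \sum_(w in W) \sum_(e | f e \in [set w]) v e.
Proof.
rewrite (partition_big f (mem W)) //=; apply: eq_bigr => w wW.
by apply: eq_bigl => e; rewrite in_set1 andbC; case: eqP => // ->.
Qed.

Lemma flux_sum_set1 (v : E -> R) (W : {set V}) :
  flux v W = \sum_(w in W) flux v [set w].
Proof. by rewrite /Defs.flux sumrB !sum_partition_set1. Qed.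

Lemma flux_set1 (v : E -> R) (w : V) :
  flux v [set w] = \sum_(e | src e == w) v e - \sum_(e | tgt e == w) v e.
Proof. by congr (_ - _); apply: eq_bigl => e; rewrite in_set1. Qed.

Lemma flux_leavesE (v : E -> R) (W : {set V}) :
  flux v W = \sum_(e | leaves W e) v e - \sum_(e | leaves (~: W) e) v e.
Proof.
rewrite /Defs.flux (bigID (fun e => tgt e \in W)) /=.
rewrite [X in _ - X](bigID (fun e => src e \in W)) /=.
have -> : \sum_(e | (tgt e \in W) && (src e \in W)) v e =
          \sum_(e | (src e \in W) && (tgt e \in W)) v e by apply: eq_bigl => e; rewrite andbC.
have -> : \sum_(e | leaves (~: W) e) v e =
          \sum_(e | (tgt e \in W) && (src e \notin W)) v e.
  by apply: eq_bigl => e; rewrite /leaves !inE negbK andbC.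
by rewrite opprD addrACA subrr add0r.
Qed.

Lemma flow_flux_set1 (v : E -> R) (w : V) :
  is_flow v -> w \notin bnd -> flux v [set w] = 0.
Proof. by case=> _ conservation /conservation balanced; rewrite flux_set1 balanced subrr. Qed.

Lemma flux_setIbnd (v : E -> R) (W : {set V}) :
  is_flow v -> flux v (W :&: bnd) = flux v W.
Proof.
move=> flow_v; rewrite [RHS]flux_sum_set1 (big_setID bnd) /= -flux_sum_set1.
rewrite [X in _ + X]big1 ?addr0 // => w; rewrite inE => /andP[w_inner _].
exact: flow_flux_set1.
Qed.

Lemma flux_le_cut_cap (v : E -> R) (W : {set V}) :
  is_flow v -> flux v (W :&: bnd) <= cut_cap W.
Proof.
move=> flow_v; rewrite flux_setIbnd // flux_leavesE.
have out_le : \sum_(e | leaves W e) v e <= cut_cap W.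
  by apply: ler_sum => e _; case: (flow_v.1 e).
have in_ge0 : 0 <= \sum_(e | leaves (~: W) e) v e.
  by apply: sumr_ge0 => e _; case: (flow_v.1 e).
lra.
Qed.

Lemma flux_le_maxflux (v : E -> R) (X : {set V}) : is_flow v -> flux v X <= maxflux X.
Proof.
move=> flow_v; apply: ub_le_sup; last by exists v.
exists (cut_cap X) => _ [u [flow_u ->]].
by rewrite -flux_setIbnd //; apply: flux_le_cut_cap.
Qed.

Lemma inner_superbalanced_flux_ge0 (T : {set V}) :
  inner_superbalanced src tgt bnd c -> [disjoint T & bnd] -> 0 <= flux c T.
Proof.
move=> superbalanced dTb; rewrite flux_sum_set1; apply: sumr_ge0 => w wT.
by rewrite flux_set1 subr_ge0 superbalanced // (disjointFr dTb wT).
Qed.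

Lemma leaves_tripartition (W1 W2 W3 : {set V}) (e : E) :
  (leaves (W1 :&: W2 :\: W3) e + leaves (W1 :&: W3 :\: W2) e
   + leaves (W2 :&: W3 :\: W1) e + leaves (W1 :|: W2 :|: W3) e
   + (src e \in W1 :&: W2 :&: W3)
  <= leaves W1 e + leaves W2 e + leaves W3 e + (tgt e \in W1 :&: W2 :&: W3))%N.
Proof.
rewrite /leaves !inE.
by case: (src e \in W1); case: (src e \in W2); case: (src e \in W3);
   case: (tgt e \in W1); case: (tgt e \in W2); case: (tgt e \in W3).
Qed.

Lemma sum_mul_natb (P : pred E) :
  \sum_e c e * (P e)%:R = \sum_(e | P e) c e.
Proof.
by rewrite [RHS]big_mkcond; apply: eq_bigr => e _; case: (P e); rewrite ?mulr1 ?mulr0.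
Qed.

Section NonnegativeCapacity.
Hypothesis c_ge0 : forall e, 0 <= c e.

Lemma maxflux_le_cut_cap (W : {set V}) : maxflux (W :&: bnd) <= cut_cap W.
Proof.
have flow0 : is_flow (fun=> 0) by split=> [e | x _]; [rewrite lexx c_ge0 | rewrite !big1].
apply: ge_sup; first by exists (flux (fun=> 0) (W :&: bnd)), (fun=> 0).
by move=> _ [v [flow_v ->]]; apply: flux_le_cut_cap.
Qed.

Lemma cut_cap_tripartition (W1 W2 W3 : {set V}) :
  inner_superbalanced src tgt bnd c -> [disjoint W1 :&: W2 :&: W3 & bnd] ->
  cut_cap (W1 :&: W2 :\: W3) + cut_cap (W1 :&: W3 :\: W2)
  + cut_cap (W2 :&: W3 :\: W1) + cut_cap (W1 :|: W2 :|: W3)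
  <= cut_cap W1 + cut_cap W2 + cut_cap W3.
Proof.
move=> superbalanced dTb.
have := inner_superbalanced_flux_ge0 superbalanced dTb; rewrite /Defs.flux.
have := ler_sum (index_enum E) (P := predT) (fun e _ => ler_wpM2l (c_ge0 e)
  (eqbRL (ler_nat R _ _) (leaves_tripartition W1 W2 W3 e))).
under eq_bigr do rewrite !natrD !mulrDr.
under [X in _ <= X]eq_bigr do rewrite !natrD !mulrDr.
rewrite !big_split /= !sum_mul_natb /cut_cap; lra.
Qed.

End NonnegativeCapacity.

Section UnitCapacity.
Hypothesis c1 : forall e, c e = 1.

Definition indicator (F : {set E}) : E -> R := fun e => (e \in F)%:R.

Definition residual (F : {set E}) : rel V := fun x y =>
  [exists e, [&& src e == x, tgt e == y & e \notin F]
          || [&& tgt e == x, src e == y & e \in F]].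

Lemma indicator_flow (F : {set E}) :
  (forall w, w \notin bnd -> flux (indicator F) [set w] = 0) -> is_flow (indicator F).
Proof.
move=> balanced; split=> [e | w /balanced]; first by rewrite c1 ler0n lern1 leq_b1.
by rewrite flux_set1 => /subr0_eq.
Qed.

Lemma flux_indicator0 (X : {set V}) : flux (indicator set0) X = 0.
Proof. by rewrite /Defs.flux !big1 ?subr0 // => e _; rewrite /indicator inE. Qed.

Lemma sum_indicator_setU1 (P : pred E) (F : {set E}) (e0 : E) : e0 \notin F ->
  \sum_(e | P e) indicator (e0 |: F) e = \sum_(e | P e) indicator F e + (P e0)%:R.
Proof.
move=> e0F; rewrite (eq_bigr (fun e => indicator F e + (e == e0)%:R)) => [|e _]; last first.
  by rewrite /indicator in_setU1; case: eqP => [->|_]; rewrite ?(negbTE e0F) ?add0r ?addr0.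
rewrite big_split /=; congr (_ + _); case P_e0: (P e0).
  by rewrite (bigD1 e0) //= eqxx big1 ?addr0 // => e /andP[_ /negbTE ->].
by apply: big1 => e Pe; case: eqP => // eE; rewrite -eE Pe in P_e0.
Qed.

Lemma flux_indicator_setU1 (F : {set E}) (e0 : E) (X : {set V}) : e0 \notin F ->
  flux (indicator (e0 |: F)) X =
  flux (indicator F) X + ((src e0 \in X)%:R - (tgt e0 \in X)%:R).
Proof. by move=> e0F; rewrite /Defs.flux !sum_indicator_setU1 //; lra. Qed.

Lemma augmenting_path (F : {set E}) (x : V) (p : seq V) :
  path (residual F) x p -> uniq (x :: p) ->
  exists F' : {set E},
    (forall X, flux (indicator F') X =
               flux (indicator F) X + ((x \in X)%:R - (last x p \in X)%:R)) /\
    (forall e, (e \in F') != (e \in F) -> (src e \in x :: p) && (tgt e \in x :: p)).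
Proof.
elim: p x => [|y p IH] x /=.
  by move=> _ _; exists F; split=> [X | e]; rewrite ?subrr ?addr0 ?eqxx.
case/andP=> /existsP[e0 res_e0] path_p /andP[x_notin uniq_p].
have [F' [flux_F' toggled]] := IH y path_p uniq_p.
have e0_ends : (src e0 \in [:: x, y & p]) && (tgt e0 \in [:: x, y & p]).
  by case/orP: res_e0 => /and3P[/eqP-> /eqP-> _]; rewrite !inE !eqxx !orbT.
have e0_kept : (e0 \in F') = (e0 \in F).
  apply/eqP; apply: contraTT x_notin => /toggled /andP[s_in t_in]; apply/negPn.
  by case/orP: res_e0 => /and3P[/eqP x_end _ _]; rewrite -x_end.
have [F'' same_F'' flux_F''] : exists2 F'' : {set E},
    forall e, e != e0 -> (e \in F'') = (e \in F') &
    forall X, flux (indicator F'') X =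
              flux (indicator F') X + ((x \in X)%:R - (y \in X)%:R).
  case/orP: res_e0 => /and3P[/eqP s_e0 /eqP t_e0 e0F].
    exists (e0 |: F') => [e e_ne | X]; first by rewrite in_setU1 (negbTE e_ne).
    by rewrite flux_indicator_setU1 ?e0_kept // s_e0 t_e0.
  exists (F' :\ e0) => [e e_ne | X]; first by rewrite in_setD1 e_ne.
  have e0F' : e0 \in F' by rewrite e0_kept.
  by rewrite -[in RHS](setD1K e0F') flux_indicator_setU1 ?setD11 // s_e0 t_e0; lra.
exists F''; split=> [X | e]; first by rewrite flux_F'' flux_F'; lra.
have [-> // | e_ne] := eqVneq e e0.
by rewrite same_F'' // => /toggled /andP[s_in t_in]; rewrite !(in_cons x) s_in t_in !orbT.
Qed.

Lemma augment (F : {set E}) (X : {set V}) (x y : V) :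
  is_flow (indicator F) -> x \in bnd -> x \in X -> y \in bnd -> y \notin X ->
  connect (residual F) x y ->
  exists F' : {set E},
    is_flow (indicator F') /\ flux (indicator F') X = flux (indicator F) X + 1.
Proof.
move=> flow_F xb xX + + /connectP[p path_p y_last]; rewrite y_last.
case: (shortenP path_p) => p' path_p' uniq_p' _ yb yX.
have [F' [flux_F' _]] := augmenting_path path_p' uniq_p'.
exists F'; split; last by rewrite flux_F' xX (negbTE yX) subr0.
apply: indicator_flow => w wb; rewrite flux_F' (flow_flux_set1 flow_F wb) !in_set1.
have /negbTE-> : x != w by apply: contraNneq wb => <-.
have /negbTE-> : last x p' != w by apply: contraNneq wb => <-.
by rewrite subrr addr0.
Qed.

Lemma residual_closed_flux (F : {set E}) (W : {set V}) :
  (forall a b, a \in W -> residual F a b -> b \in W) -> flux (indicator F) W = cut_cap W.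
Proof.
move=> closed; rewrite flux_leavesE [X in _ - X]big1 ?subr0 => [|e]; last first.
  rewrite /leaves !inE negbK => /andP[sW tW].
  rewrite /indicator; suff /negbTE-> : e \notin F by [].
  apply: contraNN sW => eF; apply: (closed (tgt e)) => //.
  by apply/existsP; exists e; rewrite eF !eqxx orbT.
apply: eq_bigr => e /andP[sW tW]; rewrite c1 /indicator; suff -> : e \in F by [].
apply: contraNT tW => eF; apply: (closed (src e)) => //.
by apply/existsP; exists e; rewrite eF !eqxx.
Qed.

Lemma augment_or_min_cut (F : {set E}) (X : {set V}) :
  X \subset bnd -> is_flow (indicator F) ->
  (exists2 W, W :&: bnd = X & flux (indicator F) X = cut_cap W) \/
  exists F' : {set E},
    is_flow (indicator F') /\ flux (indicator F') X = flux (indicator F) X + 1.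
Proof.
move=> Xb flow_F; pose W := [set w | [exists x in X, connect (residual F) x w]].
have XW : X \subset W.
  by apply/subsetP => x xX; rewrite inE; apply/existsP; exists x; rewrite xX connect0.
have [WbX | /subsetPn[y /setIP[yW yb] yX]] := boolP (W :&: bnd \subset X).
  have WbE : W :&: bnd = X by apply/eqP; rewrite eqEsubset WbX subsetI XW Xb.
  left; exists W; rewrite // -[in LHS]WbE flux_setIbnd //.
  apply: residual_closed_flux => a b; rewrite !inE => /existsP[x /andP[xX xa]] ab.
  by apply/existsP; exists x; rewrite xX (connect_trans xa (connect1 ab)).
move: yW; rewrite inE => /existsP[x /andP[xX xy]]; right.
exact: augment flow_F (subsetP Xb x xX) xX yb yX xy.
Qed.

Lemma cut_cap_card (W : {set V}) : cut_cap W = #|[set e | leaves W e]|%:R.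
Proof. by rewrite -sum1dep_card natr_sum; apply: eq_bigr => e _; rewrite c1. Qed.

Lemma min_cut_flow (X : {set V}) : X \subset bnd ->
  exists2 W, W :&: bnd = X &
    exists F : {set E}, is_flow (indicator F) /\ flux (indicator F) X = cut_cap W.
Proof.
move=> Xb.
suff gap n F : is_flow (indicator F) -> cut_cap X - flux (indicator F) X <= n%:R ->
    exists2 W, W :&: bnd = X &
      exists F, is_flow (indicator F) /\ flux (indicator F) X = cut_cap W.
  apply: (gap _ set0); last by rewrite flux_indicator0 subr0 cut_cap_card.
  by apply: indicator_flow => w _; rewrite flux_indicator0.
elim: n F => [|n IH] F flow_F gap_F;
  have [[W WX flux_W] | [F' [flow_F' flux_F']]] := augment_or_min_cut Xb flow_F.
- by exists W; last by exists F.
- by have := flux_le_cut_cap X flow_F'; rewrite (setIidPl Xb) flux_F'; lra.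
- by exists W; last by exists F.
- by apply: (IH F') => //; rewrite flux_F'; move: gap_F; rewrite -natr1; lra.
Qed.

Lemma maxflux_min_cut (X : {set V}) : X \subset bnd ->
  exists2 W, W :&: bnd = X & maxflux X = cut_cap W.
Proof.
move=> Xb; have [W WX [F [flow_F flux_F]]] := min_cut_flow Xb.
have c_ge0 e : 0 <= c e by rewrite c1.
exists W => //; apply: le_anti; apply/andP; split.
  by rewrite -WX; apply: maxflux_le_cut_cap.
by rewrite -flux_F; apply: flux_le_maxflux.
Qed.

End UnitCapacity.
End Network.

Theorem theorem5 (R : realType) (V E : finType) (src tgt : E -> V)
    (bnd : {set V}) (c : E -> R) (A B C D : {set V}) :
  (forall e, c e = 1) ->
  inner_superbalanced src tgt bnd c ->
  A :|: B :|: C :|: D = bnd ->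
  [disjoint A & B] -> [disjoint A & C] -> [disjoint A & D] ->
  [disjoint B & C] -> [disjoint B & D] -> [disjoint C & D] ->
  let S := maxflux src tgt bnd c in
  0 <= S (A :|: B) + S (A :|: C) + S (B :|: C)
       - S A - S B - S C - S (A :|: B :|: C).
Proof.
move=> c1 superbalanced bnd_part dAB dAC _ dBC _ _; cbv zeta.
have c_ge0 e : 0 <= c e by rewrite c1.
have : A :|: B :|: C :|: D \subset bnd by rewrite bnd_part.
rewrite !subUset -!andbA => /and4P[Ab Bb Cb _].
have subU (X Y : {set V}) : X \subset bnd -> Y \subset bnd -> X :|: Y \subset bnd.
  by move=> Xb Yb; apply/subUsetP.
have [W1 W1b ->] := maxflux_min_cut src tgt c1 (subU _ _ Ab Bb).
have [W2 W2b ->] := maxflux_min_cut src tgt c1 (subU _ _ Ab Cb).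
have [W3 W3b ->] := maxflux_min_cut src tgt c1 (subU _ _ Bb Cb).
have [EA EB EC EABC dT] := setI_tripartition dAB dAC dBC W1b W2b W3b.
have := maxflux_le_cut_cap src tgt bnd c_ge0 (W1 :&: W2 :\: W3); rewrite EA.
have := maxflux_le_cut_cap src tgt bnd c_ge0 (W1 :&: W3 :\: W2); rewrite EB.
have := maxflux_le_cut_cap src tgt bnd c_ge0 (W2 :&: W3 :\: W1); rewrite EC.
have := maxflux_le_cut_cap src tgt bnd c_ge0 (W1 :|: W2 :|: W3); rewrite EABC.
have := cut_cap_tripartition c_ge0 superbalanced dT.
lra.
Qed.
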